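(* For every integer $p \ge 1$ there exist an integer $k$ and a $k$-colourable $(K_4, \text{diamond}, \text{paw}, \text{co-claw}, \text{co-diamond})$-free graph $G$ that is not $(k+p)$-mixing.
   Context: All graphs are finite and simple. A $k$-colouring of $G$ is a map $\alpha: V(G)\to\{1,\dots,k\}$ with $\alpha(u)\neq\alpha(v)$ for every edge $uv$; $G$ is $k$-colourable if one exists. The reconfiguration graph $\mathcal{R}_k(G)$ has the $k$-colourings of $G$ as vertices, two being adjacent if they differ on exactly one vertex; $G$ is $k$-mixing if $\mathcal{R}_k(G)$ is connected. A graph is $\mathcal{H}$-free if it contains no induced subgraph isomorphic to any member of $\mathcal{H}$. The diamond is $K_4$ minus one edge; the paw is a triangle with a pendant vertex attached to one triangle vertex; the co-claw is $K_3+K_1$ (a triangle plus an isolated vertex); the co-diamond is $K_2+2K_1$ (one edge plus two isolated vertices). *)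

From mathcomp Require Import all_boot.
From Stdlib Require Import Relation_Operators.
Set Implicit Arguments. Unset Strict Implicit. Unset Printing Implicit Defensive.

Definition simple_graph (T : finType) (e : rel T) : Prop :=
  symmetric e /\ irreflexive e.

(* k-colourings: maps T -> {1..k}, represented as T -> 'I_k. *)
Definition is_colouring (T : finType) (e : rel T) (k : nat) (a : {ffun T -> 'I_k}) : Prop :=
  forall u v, e u v -> a u != a v.

Definition colourable (T : finType) (e : rel T) (k : nat) : Prop :=
  exists a : {ffun T -> 'I_k}, is_colouring e a.

Definition recolour_adj (T : finType) (e : rel T) (k : nat)
  (a b : {ffun T -> 'I_k}) : Prop :=
  is_colouring e a /\ is_colouring e b /\ #|[set v | a v != b v]| = 1.

Definition mixing (T : finType) (e : rel T) (k : nat) : Prop :=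
  forall a b : {ffun T -> 'I_k}, is_colouring e a -> is_colouring e b ->
    clos_refl_trans _ (@recolour_adj T e k) a b.

Definition contains_induced (S : finType) (h : rel S) (T : finType) (e : rel T) : Prop :=
  exists f : S -> T, injective f /\ forall x y, h x y = e (f x) (f y).

Definition graph4 (s : seq (nat * nat)) : rel 'I_4 :=
  fun x y => ((nat_of_ord x, nat_of_ord y) \in s) || ((nat_of_ord y, nat_of_ord x) \in s).

Definition K4_g : rel 'I_4 := graph4 [:: (0,1); (0,2); (0,3); (1,2); (1,3); (2,3)].
Definition diamond_g : rel 'I_4 := graph4 [:: (0,2); (0,3); (1,2); (1,3); (2,3)].
Definition paw_g : rel 'I_4 := graph4 [:: (0,1); (0,2); (1,2); (0,3)].
Definition coclaw_g : rel 'I_4 := graph4 [:: (0,1); (0,2); (1,2)].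
Definition codiamond_g : rel 'I_4 := graph4 [:: (0,1)].

Definition forbidden_free (T : finType) (e : rel T) : Prop :=
  ~ contains_induced K4_g e /\ ~ contains_induced diamond_g e /\
  ~ contains_induced paw_g e /\ ~ contains_induced coclaw_g e /\
  ~ contains_induced codiamond_g e.

(* The crown graph on n + n vertices, K_{n,n} minus a perfect matching, is bipartite
   and hence triangle-free; it is also co-diamond-free, because the common
   non-neighbours of an edge (x, i) (~~ x, j) are exactly (x, j) and (~~ x, i), which
   are adjacent. The colouring (x, i) |-> i uses n colours and is frozen: the colour
   of (x, i) cannot be changed to c != i, since its neighbour (~~ x, c) has colour c.
   Taking n = p + 2, the crown graph is 2-colourable but not (2 + p)-mixing. *)
From mathcomp Require Import all_boot.
From Stdlib Require Import Relation_Operators Operators_Properties.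
Set Implicit Arguments. Unset Strict Implicit. Unset Printing Implicit Defensive.

Lemma frozen_not_mixing (T : finType) (e : rel T) (k : nat) (a b : {ffun T -> 'I_k}) :
  is_colouring e a -> is_colouring e b -> a != b ->
  (forall c, ~ recolour_adj e a c) -> ~ mixing e k.
Proof.
move=> a_col b_col a_neq_b a_frozen /(_ a b a_col b_col)/clos_rt_rt1n_iff path_ab.
destruct path_ab as [|c b a_c _]; first by rewrite eqxx in a_neq_b.
exact: a_frozen a_c.
Qed.

Definition triangle_free (T : finType) (e : rel T) : Prop :=
  forall u v w, e u v -> e v w -> e u w -> False.

Lemma triangle_free_induced (S T : finType) (h : rel S) (e : rel T) (a b c : S) :
  triangle_free e -> h a b -> h b c -> h a c -> ~ contains_induced h e.
Proof.
move=> e_free hab hbc hac [f [_ hf]].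
by apply: (e_free (f a) (f b) (f c)); rewrite -hf.
Qed.

Local Notation "''v_' i" := (@Ordinal 4 i isT) (at level 0, i at level 0).

Section Crown.

Variable n : nat.

Definition crown : rel (bool * 'I_n) := fun u v => (u.1 != v.1) && (u.2 != v.2).

Lemma crown_simple : simple_graph crown.
Proof.
split=> [[x i] [y j]|[x i]]; rewrite /crown /=; last by rewrite eqxx.
by rewrite eq_sym [j == i]eq_sym.
Qed.

Lemma crown_triangle_free : triangle_free crown.
Proof. by move=> [[] i] [[] j] [[] l]; rewrite /crown /= ?andbF. Qed.

Lemma crown_common_nonneighbour u v w :
  crown u v -> ~~ crown u w -> ~~ crown v w -> w = (u.1, v.2) \/ w = (v.1, u.2).
Proof.
case: u v w => [x i] [y j] [z l]; rewrite /crown /= !negb_and !negbK.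
case/andP=> /negbTE x_y /negbTE i_j /orP[/eqP<-|/eqP<-] /orP[/eqP y_x|/eqP j_l].
- by rewrite y_x eqxx in x_y.
- by left; rewrite j_l.
- by right; rewrite -y_x.
- by rewrite j_l eqxx in i_j.
Qed.

Lemma crown_common_nonneighbours_adjacent u v w w' :
  crown u v -> ~~ crown u w -> ~~ crown v w -> ~~ crown u w' -> ~~ crown v w' ->
  w != w' -> crown w w'.
Proof.
move=> uv uw vw uw' vw'.
have swapped : crown (u.1, v.2) (v.1, u.2) by move: uv; rewrite /crown /= [v.2 == _]eq_sym.
have [->|->] := crown_common_nonneighbour uv uw vw;
have [->|->] := crown_common_nonneighbour uv uw' vw'; rewrite ?eqxx //.
by rewrite (proj1 crown_simple).
Qed.

Lemma crown_codiamond_free : ~ contains_induced codiamond_g crown.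
Proof.
move=> [f [f_inj hf]].
have /negP[] : ~~ crown (f 'v_2) (f 'v_3) by rewrite -hf.
apply: (@crown_common_nonneighbours_adjacent (f 'v_0) (f 'v_1)); rewrite -?hf //.
by apply/eqP=> /f_inj.
Qed.

Lemma crown_forbidden_free : forbidden_free crown.
Proof.
have no_triangle (h : rel 'I_4) (a b c : 'I_4) :
    h a b -> h b c -> h a c -> ~ contains_induced h crown.
  exact: triangle_free_induced crown_triangle_free.
split; first exact: (@no_triangle K4_g 'v_0 'v_1 'v_2).
split; first exact: (@no_triangle diamond_g 'v_0 'v_2 'v_3).
split; first exact: (@no_triangle paw_g 'v_0 'v_1 'v_2).
split; first exact: (@no_triangle coclaw_g 'v_0 'v_1 'v_2).
exact: crown_codiamond_free.
Qed.

Definition side_colouring k (c0 c1 : 'I_k) : {ffun bool * 'I_n -> 'I_k} :=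
  [ffun v => if v.1 then c0 else c1].

Lemma side_colouringP k (c0 c1 : 'I_k) :
  c0 != c1 -> is_colouring crown (side_colouring c0 c1).
Proof.
by move=> c01 [[] i] [[] j]; rewrite !ffunE //= => _; rewrite eq_sym.
Qed.

Definition index_colouring : {ffun bool * 'I_n -> 'I_n} := [ffun v => v.2].

Lemma index_colouringP : is_colouring crown index_colouring.
Proof. by move=> u v /andP[_]; rewrite !ffunE. Qed.

Lemma index_colouring_frozen c : ~ recolour_adj crown index_colouring c.
Proof.
move=> [_ [c_col /eqP/cards1P[[x i] diff_c]]].
have changed v : (index_colouring v != c v) = (v == (x, i)).
  by rewrite -in_set1 -diff_c inE.
have [x_flip flip_x] : (x == ~~ x) = false /\ (~~ x == x) = false by case: x {diff_c changed}.
pose w := (~~ x, c (x, i)).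
have xi_w : crown (x, i) w.
  by move: (changed (x, i)); rewrite /crown /= x_flip ffunE eqxx.
have kept : index_colouring w = c w.
  by apply/eqP; rewrite -[_ == _]negbK changed xpair_eqE flip_x.
by move: (c_col _ _ xi_w); rewrite -kept ffunE eqxx.
Qed.

Lemma crown_not_mixing : 1 < n -> ~ mixing crown n.
Proof.
move=> lt1n; pose c1 : 'I_n := Ordinal lt1n; pose c0 : 'I_n := Ordinal (ltnW lt1n).
apply: (frozen_not_mixing index_colouringP (side_colouringP (c0 := c0) (c1 := c1) isT)).
  by apply/eqP=> /ffunP/(_ (true, c1)); rewrite !ffunE.
exact: index_colouring_frozen.
Qed.

End Crown.

Theorem theorem5 : forall p : nat, 1 <= p ->
  exists (k : nat) (T : finType) (e : rel T),
    simple_graph e /\ colourable e k /\ forbidden_free e /\ ~ mixing e (k + p).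
Proof.
move=> p _.
exists 2, (bool * 'I_(2 + p))%type, (@crown (2 + p)).
split; first exact: crown_simple.
split; first by exists (side_colouring (2 + p) ord0 ord_max); apply: side_colouringP.
split; first exact: crown_forbidden_free.
exact: crown_not_mixing.
Qed.
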